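(* Let $\beta_1:\mathbb{R}\to\mathbb{R}^3$, $\beta_1(z')=(0,0,z')$, and $\beta_2:\mathbb{R}^2\to\mathbb{R}^3$, $\beta_2(z'')=(z''_1,z''_2,0)$. Let $dq_0^1$ and $dq_0^2$ be positive Radon measures on $\mathbb{R}$ and $\mathbb{R}^2$ respectively, each satisfying $\int_{|z|<1}|z|^2dq_0^l(z)+\int_{|z|\ge1}|z|\,dq_0^l(z)<\infty$, and jointly satisfying condition (B'). Let $H:\mathbb{R}^3\times\mathbb{R}^3\to\mathbb{R}$ be continuous, $\mathbb{Z}^3$-periodic in its first variable, with $H(y,0)\ge0$ for all $y$. Let $u$ be an upper semicontinuous $\mathbb{Z}^3$-periodic viscosity subsolution of $$H(y,\nabla v)+\max\Big\{-\int_{\mathbb{R}}[v(y+\beta_1(z'))-v(y)-\langle\beta_1(z'),\nabla v(y)\rangle]dq_0^1(z'),\ -\int_{\mathbb{R}^2}[v(y+\beta_2(z''))-v(y)-\langle\beta_2(z''),\nabla v(y)\rangle]dq_0^2(z'')\Big\}=0\ \text{in }\mathbb{T}^3.$$ If $u$ attains its maximum over $\mathbb{T}^3$ at some $\bar y$, then $u$ is constant on $\mathbb{T}^3$.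
   Context: $\mathbb{T}^3=[0,1]^3$; functions on it are $\mathbb{Z}^3$-periodic functions on $\mathbb{R}^3$. Condition (B'): let $S_0^l=\mathrm{supp}(dq_0^l)$, $l=1,2$. For any $y,y'\in\mathbb{T}^3$ there exist finitely many points $y_1=y,\dots,y_m=y'$ in $\mathbb{T}^3$ such that for any positive numbers $\varepsilon_i$ ($1\le i\le m$) one can choose subsets $J_i$, each either $J_i\subset S_0^1$ or $J_i\subset S_0^2$, such that if $J_i\subset S_0^l$ then $\int_{J_i}1\,dq_0^l>0$ and $y_i+\beta_l(z)\in B_{\varepsilon_i}(y_{i+1})$ (mod $\mathbb{Z}^3$) for all $z\in J_i$. Viscosity subsolution: for every $\hat y$ and $\phi\in C^2(\mathbb{R}^3)$ with $u-\phi$ attaining a global maximum at $\hat y$, $u(\hat y)=\phi(\hat y)$, the integrands with $\nabla v(\hat y)$ replaced by $\nabla\phi(\hat y)$ and $v$ replaced by $u$ are integrable and the left-hand side evaluated this way is $\le0$. *)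

(* R^3 is represented by row vectors 'rV[R]_3,
   R^2 (the domain of beta_2 and of dq_0^2) by the product type R * R. *)
From HB Require Import structures.
From mathcomp Require Import all_boot all_order all_algebra.
From mathcomp Require Import all_classical all_reals all_analysis.
Set Implicit Arguments. Unset Strict Implicit. Unset Printing Implicit Defensive.
Import Order.TTheory GRing.Theory Num.Theory.
Import numFieldNormedType.Exports.
Local Open Scope classical_set_scope.
Local Open Scope ring_scope.

Section Defs.
Variable R : realType.
Notation V3 := 'rV[R]_3.

Definition dot3 (a b : V3) : R := \sum_(i < 3) a 0 i * b 0 i.
Definition enorm3 (a : V3) : R := Num.sqrt (dot3 a a).
Definition enorm1 (z : R) : R := `|z|.
Definition enorm2 (z : R * R) : R := Num.sqrt (z.1 ^+ 2 + z.2 ^+ 2).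

Definition beta1 (z : R) : V3 := \row_(i < 3) (if (i : nat) == 2%N then z else 0).
Definition beta2 (z : R * R) : V3 :=
  \row_(i < 3) (if (i : nat) == 0%N then z.1 else if (i : nat) == 1%N then z.2 else 0).

Definition zvec (k : 'I_3 -> int) : V3 := \row_(i < 3) (k i)%:~R.

Definition Z3periodic (f : V3 -> R) : Prop :=
  forall (k : 'I_3 -> int) (y : V3), f (y + zvec k) = f y.

Definition in_ball_mod (a b : V3) (eps : R) : Prop :=
  exists k : 'I_3 -> int, enorm3 (a - (b + zvec k)) < eps.

Definition usc (u : V3 -> R) : Prop :=
  forall (x : V3) (a : R), u x < a -> \forall y \near x, u y < a.

Definition evec (i : 'I_3) : V3 := delta_mx 0 i.
Definition partial (i : 'I_3) (f : V3 -> R) : V3 -> R := fun x => 'D_(evec i) f x.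
Definition grad (f : V3 -> R) (x : V3) : V3 := \row_(i < 3) partial i f x.
Definition C2 (f : V3 -> R) : Prop :=
  continuous f /\
  forall i j : 'I_3,
    (forall x, derivable f x (evec i)) /\ continuous (partial i f) /\
    (forall x, derivable (partial i f) x (evec j)) /\
    continuous (partial j (partial i f)).

Definition radon1 (mu : {measure set R -> \bar R}) : Prop :=
  forall K : set R, compact K -> (mu K < +oo)%E.
Definition radon2 (mu : {measure set (R * R)%type -> \bar R}) : Prop :=
  forall K : set (R * R), compact K -> (mu K < +oo)%E.

Definition levy1 (mu : {measure set R -> \bar R}) : Prop :=
  (\int[mu]_(z in [set z | (enorm1 z < 1)%R]) ((enorm1 z ^+ 2)%R)%:E
   + \int[mu]_(z in [set z | (1 <= enorm1 z)%R]) (enorm1 z)%:E < +oo)%E.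
Definition levy2 (mu : {measure set (R * R)%type -> \bar R}) : Prop :=
  (\int[mu]_(z in [set z | (enorm2 z < 1)%R]) ((enorm2 z ^+ 2)%R)%:E
   + \int[mu]_(z in [set z | (1 <= enorm2 z)%R]) (enorm2 z)%:E < +oo)%E.

Definition supp1 (mu : {measure set R -> \bar R}) : set R :=
  [set z | forall r : R, 0 < r -> (0 < mu (ball z r))%E].
Definition supp2 (mu : {measure set (R * R)%type -> \bar R}) : set (R * R) :=
  [set z | forall r : R, 0 < r -> (0 < mu (ball z r))%E].

(* Condition (B').  Points of T^3 are represented by points of R^3; the chain
   y_1 = y, ..., y_m = y' is ys 0, ..., ys m' (0-based, m' = m - 1). *)
Definition condB' (mu1 : {measure set R -> \bar R})
    (mu2 : {measure set (R * R)%type -> \bar R}) : Prop :=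
  forall y y' : V3, exists (m : nat) (ys : nat -> V3),
    ys 0%N = y /\ ys m = y' /\
    forall eps : nat -> R, (forall i, 0 < eps i) ->
    forall i : nat, (i < m)%N ->
      (exists J : set R, J `<=` supp1 mu1 /\ measurable J /\ (0 < mu1 J)%E /\
         forall z, J z -> in_ball_mod (ys i + beta1 z) (ys i.+1) (eps i))
   \/ (exists J : set (R * R), J `<=` supp2 mu2 /\ measurable J /\ (0 < mu2 J)%E /\
         forall z, J z -> in_ball_mod (ys i + beta2 z) (ys i.+1) (eps i)).

(* integrands of the two nonlocal terms, with v replaced by u and grad v(y)
   replaced by p *)
Definition integrand1 (u : V3 -> R) (y p : V3) (z : R) : R :=
  u (y + beta1 z) - u y - dot3 (beta1 z) p.
Definition integrand2 (u : V3 -> R) (y p : V3) (z : R * R) : R :=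
  u (y + beta2 z) - u y - dot3 (beta2 z) p.

Definition visc_subsol (H : V3 -> V3 -> R) (mu1 : {measure set R -> \bar R})
    (mu2 : {measure set (R * R)%type -> \bar R}) (u : V3 -> R) : Prop :=
  forall (yh : V3) (phi : V3 -> R), C2 phi ->
    (forall y, u y - phi y <= u yh - phi yh) -> u yh = phi yh ->
    mu1.-integrable setT (fun z => (integrand1 u yh (grad phi yh) z)%:E) /\
    mu2.-integrable setT (fun z => (integrand2 u yh (grad phi yh) z)%:E) /\
    H yh (grad phi yh)
      + Num.max (- Rintegral mu1 setT (integrand1 u yh (grad phi yh)))
                (- Rintegral mu2 setT (integrand2 u yh (grad phi yh))) <= 0.
End Defs.
Arguments zvec {R}.
Arguments evec {R}.

From HB Require Import structures.
From mathcomp Require Import all_boot all_order all_algebra.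
From mathcomp Require Import all_classical all_reals all_analysis.
Set Implicit Arguments. Unset Strict Implicit. Unset Printing Implicit Defensive.
Import Order.TTheory GRing.Theory Num.Theory.
Import numFieldNormedType.Exports.
Local Open Scope classical_set_scope.
Local Open Scope ring_scope.

(* Testing the subsolution inequality with the constant function u(y0) at a
   maximum point y0 kills the gradient and, since H(y0, 0) >= 0, forces both
   nonlocal integrals to be >= 0.  Their integrands are <= 0, so they vanish
   almost everywhere: every set of positive q^l-measure contains a jump z
   with u(y0 + beta_l z) = max u.  Condition (B') chains such jumps from the
   maximum point to any y up to arbitrarily small errors modulo Z^3, and upper
   semicontinuity with periodicity closes these errors. *)

Lemma nonpos_integrand_vanishes d (T : measurableType d) (R : realType)
    (mu : {measure set T -> \bar R}) (g : T -> R) :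
  mu.-integrable setT (fun z => (g z)%:E) -> (forall z, g z <= 0) ->
  0 <= Rintegral mu setT g ->
  forall J, measurable J -> (0 < mu J)%E -> exists2 z, J z & g z = 0.
Proof.
move=> ig g_le0 Ig_ge0 J mJ muJ.
have fin_Ig := integrable_fin_num measurableT ig.
have IgN : (\int[mu]_(x in setT) - (g x)%:E = - \int[mu]_(x in setT) (g x)%:E)%E.
  rewrite integralN // fin_num_adde_defr // integral0_eq // => x _.
  by rewrite (@le0_funeposE _ _ setT) ?inE // => y _; rewrite lee_fin g_le0.
have Ig0 : (\int[mu]_(x in setT) (g x)%:E = 0)%E.
  apply/eqP; rewrite eq_le; apply/andP; split; last by rewrite -(fineK fin_Ig) lee_fin.
  by rewrite -oppe_ge0 -IgN; apply: integral_ge0 => x _; rewrite oppe_ge0 lee_fin.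
have Iabs0 : (\int[mu]_(x in setT) `|(g x)%:E| = 0)%E.
  transitivity (\int[mu]_(x in setT) - (g x)%:E)%E; last by rewrite IgN Ig0 oppe0.
  by apply: eq_integral => x _; rewrite lee0_abs // lee_fin.
have [N [mN N0 gN]] := (ae_eq_integral_abs mu measurableT (measurable_int mu ig)).1 Iabs0.
apply: contrapT => no_zero.
have : (mu J <= mu N)%E.
  apply: le_measure; rewrite ?inE // => z Jz; apply: gN => /= /(_ I) [gz].
  by apply: no_zero; exists z.
by rewrite N0 leNgt muJ.
Qed.

Lemma abs_entry_le_enorm3 (R : realType) (v : 'rV[R]_3) j : `|v 0 j| <= enorm3 v.
Proof.
rewrite /enorm3 /dot3 -sqrtr_sqr; apply: ler_wsqrtr.
rewrite (bigD1 j) //= -[X in X <= _]addr0 expr2 lerD2l.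
by apply: sumr_ge0 => i _; rewrite -expr2 sqr_ge0.
Qed.

Lemma ball_enorm3 (R : realType) (x y : 'rV[R]_3) (e : R) :
  enorm3 (y - x) < e -> ball x e y.
Proof.
move=> yx_e; split; first exact: le_lt_trans (sqrtr_ge0 _) yx_e.
move=> i j; rewrite ord1 /ball /= distrC; apply: le_lt_trans yx_e.
by have := abs_entry_le_enorm3 (y - x) j; rewrite !mxE.
Qed.

Lemma C2_cst (R : realType) (c : R) : C2 (fun _ : 'rV[R]_3 => c).
Proof.
have partial_cst (i : 'I_3) (b : R) : partial i (fun _ : 'rV[R]_3 => b) = cst 0.
  by apply/funext => x; rewrite /partial derive_cst.
split=> [|i j]; first exact: cst_continuous.
rewrite !partial_cst; split=> [x|]; first exact: derivable_cst.
split; first exact: cst_continuous.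
by split=> [x|]; [exact: derivable_cst | exact: cst_continuous].
Qed.

Lemma grad_cst (R : realType) (c : R) y : grad (fun _ : 'rV[R]_3 => c) y = 0.
Proof. by apply/rowP => i; rewrite !mxE /partial derive_cst. Qed.

Lemma dot3r0 (R : realType) (a : 'rV[R]_3) : dot3 a 0 = 0.
Proof. by rewrite /dot3 big1 // => i _; rewrite mxE mulr0. Qed.

Lemma usc_periodic_max_closed (R : realType) (u : 'rV[R]_3 -> R) (M : R) y :
  usc u -> Z3periodic u -> (forall x, u x <= M) ->
  (forall e, 0 < e -> exists2 a, u a = M & in_ball_mod a y e) -> u y = M.
Proof.
move=> u_usc u_per u_le near_max; apply/eqP; rewrite eq_le u_le leNgt /=.
apply/negP => /u_usc /nbhs_ballP [e /= e_gt0 u_lt].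
have [a ua [k ak_e]] := near_max e e_gt0.
have : u (a - zvec k) < M.
  by apply/u_lt/ball_enorm3; rewrite -addrA -opprD (addrC (zvec k)).
by rewrite -(u_per k) subrK ua ltxx.
Qed.

Section MaximumPropagation.
Variables (R : realType) (mu1 : {measure set R -> \bar R}).
Variables (mu2 : {measure set (R * R)%type -> \bar R}).
Variables (H : 'rV[R]_3 -> 'rV[R]_3 -> R) (u : 'rV[R]_3 -> R).
Hypothesis H_ge0 : forall y, 0 <= H y 0.
Hypothesis u_sub : visc_subsol H mu1 mu2 u.
Variable y0 : 'rV[R]_3.
Hypothesis u_max : forall y, u y <= u y0.

Let nonlocal_terms_ge0 :
  [/\ mu1.-integrable setT (fun z => (integrand1 u y0 0 z)%:E),
      mu2.-integrable setT (fun z => (integrand2 u y0 0 z)%:E),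
      0 <= Rintegral mu1 setT (integrand1 u y0 0) &
      0 <= Rintegral mu2 setT (integrand2 u y0 0)].
Proof.
have [||] := u_sub (yh := y0) (C2_cst (u y0)); [by move=> y; rewrite subrr subr_le0 | by [] |].
rewrite grad_cst => i1 [i2 sub_le0].
have max_le0 : Num.max (- Rintegral mu1 setT (integrand1 u y0 0))
                       (- Rintegral mu2 setT (integrand2 u y0 0)) <= 0.
  by apply: le_trans sub_le0; rewrite lerDr.
by move: max_le0; rewrite ge_max !oppr_le0 => /andP[].
Qed.

Lemma max_along_jumps d (T : measurableType d) (mu : {measure set T -> \bar R})
    (beta : T -> 'rV[R]_3) :
  mu.-integrable setT (fun z => (u (y0 + beta z) - u y0 - dot3 (beta z) 0)%:E) ->
  0 <= Rintegral mu setT (fun z => u (y0 + beta z) - u y0 - dot3 (beta z) 0) ->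
  forall J, measurable J -> (0 < mu J)%E -> exists2 z, J z & u (y0 + beta z) = u y0.
Proof.
move=> ig Ig_ge0 J mJ muJ.
have g_le0 z : u (y0 + beta z) - u y0 - dot3 (beta z) 0 <= 0.
  by rewrite dot3r0 subr0 subr_le0.
have [z Jz] := nonpos_integrand_vanishes ig g_le0 Ig_ge0 mJ muJ.
by rewrite dot3r0 subr0 => /eqP; rewrite subr_eq0 => /eqP; exists z.
Qed.

Lemma max_along_beta1 J : measurable J -> (0 < mu1 J)%E ->
  exists2 z, J z & u (y0 + beta1 z) = u y0.
Proof.
have [i1 _ I1 _] := nonlocal_terms_ge0.
exact: (@max_along_jumps _ _ mu1 (@beta1 R) i1 I1).
Qed.

Lemma max_along_beta2 J : measurable J -> (0 < mu2 J)%E ->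
  exists2 z, J z & u (y0 + beta2 z) = u y0.
Proof.
have [_ i2 _ I2] := nonlocal_terms_ge0.
exact: (@max_along_jumps _ _ mu2 (@beta2 R) i2 I2).
Qed.

End MaximumPropagation.

Theorem theorem5p1 (R : realType)
  (mu1 : {measure set R -> \bar R})
  (mu2 : {measure set (R * R)%type -> \bar R})
  (H : 'rV[R]_3 -> 'rV[R]_3 -> R) (u : 'rV[R]_3 -> R) (ybar : 'rV[R]_3) :
  radon1 mu1 -> radon2 mu2 -> levy1 mu1 -> levy2 mu2 -> condB' mu1 mu2 ->
  continuous (fun yp : 'rV[R]_3 * 'rV[R]_3 => H yp.1 yp.2) ->
  (forall (k : 'I_3 -> int) (y p : 'rV[R]_3), H (y + zvec k) p = H y p) ->
  (forall y : 'rV[R]_3, 0 <= H y 0) ->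
  usc u -> Z3periodic u -> visc_subsol H mu1 mu2 u ->
  (forall y : 'rV[R]_3, u y <= u ybar) ->
  forall y : 'rV[R]_3, u y = u ybar.
Proof.
move=> _ _ _ _ condB _ _ H_ge0 u_usc u_per u_sub u_max y.
have [m [ys [ys0 [ysm chain]]]] := condB ybar y.
suff ys_max i : (i <= m)%N -> u (ys i) = u ybar by rewrite -ysm ys_max.
elim: i => [|i IH i_lt]; first by rewrite ys0.
have ui := IH (ltnW i_lt).
have u_max_i x : u x <= u (ys i) by rewrite ui.
apply: usc_periodic_max_closed => // e e_gt0.
case: (chain (fun=> e) (fun=> e_gt0) i i_lt)
  => [[J [_ [mJ [muJ ballJ]]]] | [J [_ [mJ [muJ ballJ]]]]].
- have [z Jz uz] := max_along_beta1 H_ge0 u_sub u_max_i mJ muJ.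
  by exists (ys i + beta1 z); [rewrite uz ui | exact: ballJ].
- have [z Jz uz] := max_along_beta2 H_ge0 u_sub u_max_i mJ muJ.
  by exists (ys i + beta2 z); [rewrite uz ui | exact: ballJ].
Qed.
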